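(* Let $p$ and $q$ be distinct primes. (i) If $n = p^2 q$ (with $p, q \geq 2$), then $\Gamma(\mathbb{Z}_n)$ is very cost effective. (ii) If $n = p^2 q^2$ with $p, q \geq 3$ and $p < q$, then $\Gamma(\mathbb{Z}_n)$ is very cost effective.
   Context: $\mathbb{Z}_n$ is the ring of residue classes modulo $n$. The zero-divisor graph $\Gamma(\mathbb{Z}_n)$ has as vertices the nonzero zero-divisors of $\mathbb{Z}_n$, two distinct vertices being adjacent iff their product is $0$. For a graph $G=(V,E)$ and $S\subseteq V$, a vertex $v\in S$ is very cost effective if $|N(v)\cap S| < |N(v)\cap (V\setminus S)|$, where $N(v)$ is the open neighborhood of $v$; $S$ is very cost effective if every vertex of $S$ is. A bipartition $\{S, V\setminus S\}$ is very cost effective if both parts are very cost effective sets, and $G$ is very cost effective if it has a very cost effective bipartition. *)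

From mathcomp Require Import all_boot.
Set Implicit Arguments. Unset Strict Implicit. Unset Printing Implicit Defensive.

Definition zmul_zero (n : nat) (x y : 'I_n) : bool := (x * y) %% n == 0.

Definition zdg_vertices (n : nat) : {set 'I_n} :=
  [set x : 'I_n | (val x != 0) && [exists y : 'I_n, (val y != 0) && zmul_zero x y]].

Definition zdg_adj (n : nat) : rel 'I_n :=
  fun x y => [&& x \in zdg_vertices n, y \in zdg_vertices n, x != y & zmul_zero x y].

Definition nbhd (T : finType) (V : {set T}) (adj : rel T) (v : T) : {set T} :=
  [set u in V | adj v u].

Definition very_cost_effective_vertex (T : finType) (V : {set T}) (adj : rel T)
    (S : {set T}) (v : T) : bool :=
  #|nbhd V adj v :&: S| < #|nbhd V adj v :&: (V :\: S)|.

Definition very_cost_effective_set (T : finType) (V : {set T}) (adj : rel T)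
    (S : {set T}) : bool :=
  [forall v in S, very_cost_effective_vertex V adj S v].

Definition very_cost_effective_graph (T : finType) (V : {set T}) (adj : rel T) : Prop :=
  exists S : {set T}, S \subset V /\ very_cost_effective_set V adj S
                      /\ very_cost_effective_set V adj (V :\: S).

Definition zdg_very_cost_effective (n : nat) : Prop :=
  very_cost_effective_graph (zdg_vertices n) (@zdg_adj n).

From mathcomp Require Import all_boot zify.
Set Implicit Arguments. Unset Strict Implicit. Unset Printing Implicit Defensive.

(* Whether x y = 0 in Z_n depends only on the "types" of x and y: their p- and
   q-adic valuations, capped at the exponents of p and q in n.  Each bipartition
   is the pair of level sets of a predicate, and for every vertex v we inject the
   neighbours of v on its own side into those on the other side, missing one
   point.  The injection is a translation y |-> y + c, where c is chosen from the
   type of v so that the translate stays adjacent to v but changes side.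
   For n = p^2 q the sides are the multiples and the non-multiples of q.  For
   n = p^2 q^2 the non-multiples of pq are placed according to their type, while
   the multiples of pq, which are all adjacent to each other, are split evenly
   by pairing them two by two; on them the injection is the pairing itself. *)

Lemma card_lt_inj (T : finType) (A B : {set T}) (f : T -> T) b :
  {in A &, injective f} -> {in A, forall x, f x \in B} -> b \in B ->
  {in A, forall x, f x != b} -> #|A| < #|B|.
Proof.
move=> f_inj fAB bB fb; rewrite -(card_in_imset f_inj) (cardsD1 b B) bB.
apply/subset_leq_card/subsetP => _ /imsetP[x xA ->].
by rewrite !inE fb ?fAB.
Qed.

Lemma vce_graph_of_pred (T : finType) (V : {set T}) (adj : rel T) (P : pred T) :
  (forall v, v \in V -> #|[set y in nbhd V adj v | P y == P v]|
                        < #|[set y in nbhd V adj v | P y != P v]|) ->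
  very_cost_effective_graph V adj.
Proof.
move=> P_vce; pose side b := [set x in V | P x == b].
have side_vce b : very_cost_effective_set V adj (side b).
  apply/forall_inP => v; rewrite inE => /andP[vV /eqP <-].
  rewrite /very_cost_effective_vertex.
  suff [-> ->] : nbhd V adj v :&: side (P v) = [set y in nbhd V adj v | P y == P v]
             /\ nbhd V adj v :&: (V :\: side (P v)) = [set y in nbhd V adj v | P y != P v].
    exact: P_vce.
  by split; apply/setP => y; rewrite !inE; case: (y \in V); rewrite /= ?andbT.
have sideC : V :\: side true = side false.
  by apply/setP => x; rewrite !inE; case: (x \in V); case: (P x).
exists (side true); split; first by apply/subsetP => x; rewrite inE => /andP[].
by rewrite sideC; split; apply: side_vce.
Qed.

Section ZeroDivisorGraph.
Variable n : nat.
Implicit Types x y v : 'I_n.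

Lemma zmul_zeroE x y : zmul_zero x y = (n %| x * y).
Proof. by []. Qed.

Lemma dvdn_ord_eq0 x : (n %| x) = (x == 0 :> nat).
Proof.
case: (posnP x) => [->|x_gt0]; first by rewrite dvdn0.
apply/negP => /(dvdn_leq x_gt0).
by rewrite leqNgt ltn_ord.
Qed.

Lemma zdg_verticesE x : (x \in zdg_vertices n) = ~~ (n %| x) && ~~ coprime x n.
Proof.
rewrite inE dvdn_ord_eq0; congr (_ && _); apply/existsP/idP.
  case=> y /andP[y_neq0 xy_eq0]; apply: contra y_neq0 => x_coprime.
  by rewrite -(dvdn_ord_eq0 y) -(@Gauss_dvdr n x y) // coprime_sym.
move=> not_coprime; have n_gt0 : 0 < n by apply: leq_ltn_trans (ltn_ord x).
have g_gt1 : 1 < gcdn x n by rewrite ltn_neqAle eq_sym not_coprime gcdn_gt0 n_gt0 orbT.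
exists (Ordinal (ltn_Pdiv g_gt1 n_gt0)).
apply/andP; split.
  by rewrite -lt0n divn_gt0 ?(ltnW g_gt1) ?(dvdn_leq n_gt0 (dvdn_gcdr x n)).
by rewrite zmul_zeroE /= muln_divCA_gcd dvdn_mulr.
Qed.

Definition same_side_nbhd (P : pred 'I_n) v : {set 'I_n} :=
  [set y in zdg_vertices n | [&& v != y, n %| v * y & P y == P v]].

Definition other_side_nbhd (P : pred 'I_n) v : {set 'I_n} :=
  [set y in zdg_vertices n | (n %| v * y) && (P y != P v)].

Lemma in_same_side_nbhd P v y : (y \in same_side_nbhd P v) =
  [&& y \in zdg_vertices n, v != y, n %| v * y & P y == P v].
Proof. by rewrite /same_side_nbhd in_set. Qed.

Lemma in_other_side_nbhd P v y : (y \in other_side_nbhd P v) =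
  [&& y \in zdg_vertices n, n %| v * y & P y != P v].
Proof. by rewrite /other_side_nbhd in_set. Qed.

Lemma zdg_vertex_gt0 x : x \in zdg_vertices n -> 0 < x.
Proof. by rewrite zdg_verticesE dvdn_ord_eq0 lt0n => /andP[]. Qed.

Lemma zdg_vce_of_pred (P : pred 'I_n) :
  (forall v, v \in zdg_vertices n ->
     #|same_side_nbhd P v| < #|other_side_nbhd P v|) ->
  zdg_very_cost_effective n.
Proof.
move=> P_vce; apply: (@vce_graph_of_pred _ _ _ P) => v vV.
set N := nbhd (zdg_vertices n) (@zdg_adj n) v.
suff [-> ->] : [set y in N | P y == P v] = same_side_nbhd P v
            /\ [set y in N | P y != P v] = other_side_nbhd P v.
  exact: P_vce.
split; apply: eq_finset => y; rewrite [y \in nbhd _ _ _]in_set /zdg_adj vV zmul_zeroE.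
(* [yV'] restates [yV] with the coercions of [zdg_adj], so that it rewrites there. *)
all: rewrite /= -!andbA; apply: andb_id2l => yV; have yV' : y \in zdg_vertices n := yV.
  by rewrite yV'.
by rewrite yV'; case: eqVneq => [<-|_]; rewrite ?eqxx ?andbF.
Qed.

Hypothesis n_gt0 : 0 < n.

Definition zero_ord : 'I_n := Ordinal n_gt0.

Definition ord_shift c y : 'I_n := Ordinal (ltn_pmod (y + c) n_gt0).

Lemma ord_shift_inj c : injective (ord_shift c).
Proof.
move=> y z /(congr1 val) /eqP; rewrite /= eqn_modDr !modn_small // => /eqP.
exact: val_inj.
Qed.

Lemma dvdn_ord_shift d c y : d %| n -> (d %| ord_shift c y) = (d %| y + c).
Proof. by move=> dn; rewrite /dvdn /= (modn_dvdm _ dn). Qed.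

Lemma card_lt_shift (A B : {set 'I_n}) c :
  {in A, forall y, ord_shift c y \in B} -> ord_shift c zero_ord \in B ->
  zero_ord \notin A -> #|A| < #|B|.
Proof.
move=> AB zB zA; apply: (card_lt_inj _ AB zB) => [y z _ _|y yA].
  exact: ord_shift_inj.
by rewrite (inj_eq (@ord_shift_inj c)); apply: contraNneq zA => <-.
Qed.

End ZeroDivisorGraph.

Section CappedValuation.
Variable p : nat.

Definition val2 x := (p %| x) + (p ^ 2 %| x).

Lemma dvdn_sqr_dvdn x : p ^ 2 %| x -> p %| x.
Proof. exact/dvdn_trans/dvdn_exp. Qed.

Lemma val2_0 : val2 0 = 2.
Proof. by rewrite /val2 !dvdn0. Qed.

Lemma val2_le2 x : val2 x <= 2.
Proof. by rewrite /val2; case: (p %| x); case: (p ^ 2 %| x). Qed.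

Lemma val2_gt0 x : (0 < val2 x) = (p %| x).
Proof.
by rewrite /val2; case: (boolP (p %| x)) => // px; rewrite (contraNF (@dvdn_sqr_dvdn x)).
Qed.

Lemma val2_gt1 x : (1 < val2 x) = (p ^ 2 %| x).
Proof.
by rewrite /val2; case: (boolP (p ^ 2 %| x)) => [/dvdn_sqr_dvdn ->|]; case: (p %| x).
Qed.

Lemma val2_modn m x : p ^ 2 %| m -> val2 (x %% m) = val2 x.
Proof.
move=> p2m; have pm := dvdn_sqr_dvdn p2m.
by rewrite /val2 /dvdn (modn_dvdm _ pm) (modn_dvdm _ p2m).
Qed.

Lemma val2_addn_ge x y : minn (val2 x) (val2 y) <= val2 (x + y).
Proof.
move: (@dvdn_sqr_dvdn x) (@dvdn_sqr_dvdn y) (@dvdn_sqr_dvdn (x + y)).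
move: (@dvdn_add p x y) (@dvdn_add (p ^ 2) x y); rewrite /val2.
by case: (p %| x); case: (p %| y); case: (p ^ 2 %| x); case: (p ^ 2 %| y);
  case: (p %| x + y); case: (p ^ 2 %| x + y); lia.
Qed.

Lemma val2_addn x y : val2 x != val2 y -> val2 (x + y) = minn (val2 x) (val2 y).
Proof.
move: (@dvdn_sqr_dvdn x) (@dvdn_sqr_dvdn y) (@dvdn_sqr_dvdn (x + y)).
move: (@dvdn_addl y p x) (@dvdn_addr x p y) (@dvdn_addl y (p ^ 2) x) (@dvdn_addr x (p ^ 2) y).
rewrite /val2; case: (p %| x); case: (p %| y); case: (p ^ 2 %| x); case: (p ^ 2 %| y);
  by case: (p %| x + y); case: (p ^ 2 %| x + y); lia.
Qed.

Hypothesis p_prime : prime p.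

Lemma dvdn_sqr_mul x y : (p ^ 2 %| x * y) = (1 < val2 x + val2 y).
Proof.
have val2_eq0 z : ~~ (p %| z) -> val2 z = 0 by rewrite -val2_gt0 lt0n negbK => /eqP.
have coprime_sqr z : ~~ (p %| z) -> coprime (p ^ 2) z.
  by move=> pz; rewrite coprime_pexpl // prime_coprime.
case: (boolP (p %| y)) => [py|/[dup] /val2_eq0 -> /coprime_sqr/Gauss_dvdl ->].
  case: (boolP (p %| x)) => [px|/[dup] /val2_eq0 -> /coprime_sqr/Gauss_dvdr ->].
    rewrite -mulnn dvdn_mul //; move: px py; rewrite -!val2_gt0; lia.
  by rewrite val2_gt1.
by rewrite addn0 val2_gt1.
Qed.

Lemma val2_pmul m : val2 (p * m) = (p %| m).+1.
Proof.
by rewrite /val2 dvdn_mulr // expnS expn1 dvdn_pmul2l ?prime_gt0.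
Qed.

Lemma val2_expM i m : coprime p m -> i <= 2 -> val2 (p ^ i * m) = i.
Proof.
move=> pm i_le2; have dvdn_pexp k : 0 < k -> (p ^ k %| p ^ i * m) = (k <= i).
  by move=> k_gt0; rewrite Gauss_dvdl ?dvdn_Pexp2l ?prime_gt1 ?coprime_pexpl.
by rewrite /val2 -{1}(expn1 p) !dvdn_pexp //; lia.
Qed.

End CappedValuation.

Section ShiftValuation.
Variables (p n : nat) (n_gt0 : 0 < n) (c : nat) (z : 'I_n).
Hypothesis p2n : p ^ 2 %| n.

Lemma val2_ord_shift_ge :
  minn (val2 p z) (val2 p c) <= val2 p (ord_shift n_gt0 c z).
Proof. by rewrite val2_modn // val2_addn_ge. Qed.

Lemma val2_ord_shift : val2 p z != val2 p c ->
  val2 p (ord_shift n_gt0 c z) = minn (val2 p z) (val2 p c).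
Proof. by rewrite val2_modn //; apply: val2_addn. Qed.

Lemma val2_ord_shift_eq : val2 p c < val2 p z \/ val2 p z = 2 ->
  val2 p (ord_shift n_gt0 c z) = val2 p c.
Proof.
move: val2_ord_shift_ge val2_ord_shift (val2_le2 p c) (val2_le2 p (ord_shift n_gt0 c z)).
lia.
Qed.

End ShiftValuation.

Section PSquareQ.
Variables p q : nat.
Hypotheses (p_prime : prime p) (q_prime : prime q) (p_neq_q : p != q).
Local Notation n := (p ^ 2 * q).

Let coprime_pq : coprime p q.
Proof. by rewrite prime_coprime // dvdn_prime2. Qed.

Let coprime_p2q : coprime (p ^ 2) q.
Proof. by rewrite coprime_pexpl. Qed.

Lemma p2q_gt0 : 0 < n.
Proof. by rewrite muln_gt0 expn_gt0 !prime_gt0. Qed.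

Lemma dvdn_p2q_mul x y :
  (n %| x * y) = (1 < val2 p x + val2 p y) && ((q %| x) || (q %| y)).
Proof. by rewrite Gauss_dvd // dvdn_sqr_mul // Euclid_dvdM. Qed.

Lemma zdg_vertices_p2qE (x : 'I_n) :
  (x \in zdg_vertices n) = ~~ ((1 < val2 p x) && (q %| x)) && ((0 < val2 p x) || (q %| x)).
Proof.
rewrite zdg_verticesE Gauss_dvd // val2_gt1 val2_gt0 coprimeMr coprime_pexpr //.
by rewrite ![coprime x _]coprime_sym !prime_coprime // -[~~ _ && ~~ (q %| x)]negb_or negbK.
Qed.

Lemma p2q_other_side (v z : 'I_n) : v \in zdg_vertices n ->
  (q %| z) != (q %| v) -> 2 - val2 p v <= val2 p z ->
  (q %| z -> val2 p v + val2 p z <= 2) ->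
  z \in other_side_nbhd (fun y => q %| y) v.
Proof.
rewrite in_other_side_nbhd !zdg_vertices_p2qE dvdn_p2q_mul.
move: (val2_le2 p v) (val2_le2 p z); case: (q %| v); case: (q %| z); lia.
Qed.

Lemma p2q_same_side_val2 (v y : 'I_n) : v \in zdg_vertices n ->
  y \in same_side_nbhd (fun y => q %| y) v ->
  [/\ q %| v, q %| y, val2 p v = 1 & val2 p y = 1].
Proof.
rewrite in_same_side_nbhd dvdn_p2q_mul !zdg_vertices_p2qE => vV.
case/and4P=> yV _ vy /eqP side_y.
move: (val2_le2 p v) (val2_le2 p y) vV yV vy; rewrite side_y.
by case: (q %| v) => ? ? ? ? ?; split=> //; lia.
Qed.

Lemma p2q_vertex_vce (v : 'I_n) : v \in zdg_vertices n ->
  #|same_side_nbhd (fun y => q %| y) v| < #|other_side_nbhd (fun y => q %| y) v|.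
Proof.
(* c is a neighbour of v on the other side, and translation by c moves the
   same-side neighbours of v (there are some only when val2 p v = 1 and q %| v)
   to the other side. *)
move=> vV; pose c := p ^ (2 - val2 p v) * q ^ (~~ (q %| v)).
have val2_c : val2 p c = 2 - val2 p v by rewrite val2_expM ?coprimeXr ?leq_subr.
have q_c : (q %| c) = ~~ (q %| v).
  rewrite Gauss_dvdr; last by apply: coprimeXr; rewrite coprime_sym.
  by case: (q %| v); rewrite /= ?expn1 ?dvdnn // dvdn1 gtn_eqF ?prime_gt1.
have p2n : p ^ 2 %| n by apply: dvdn_mulr.
have qn : q %| n by apply: dvdn_mull.
apply: (card_lt_shift (n_gt0 := p2q_gt0) (c := c)) => [y yS||].
- have [qv qy val2_v val2_y] := p2q_same_side_val2 vV yS.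
  have q_s : q %| ord_shift p2q_gt0 c y = false.
    by rewrite dvdn_ord_shift // dvdn_addr // q_c qv.
  apply: p2q_other_side; rewrite ?q_s ?qv // val2_v.
  by have := val2_ord_shift_ge p2q_gt0 c y p2n; rewrite val2_c val2_v val2_y.
- have val2_s : val2 p (ord_shift p2q_gt0 c (zero_ord p2q_gt0)) = 2 - val2 p v.
    by rewrite (val2_ord_shift_eq p2q_gt0 p2n) ?val2_c //; right; apply: val2_0.
  apply: p2q_other_side; rewrite ?dvdn_ord_shift // ?add0n ?q_c ?val2_s.
  + by case: (q %| v).
  + exact: leqnn.
  + by rewrite subnKC ?val2_le2.
- by rewrite in_same_side_nbhd zdg_vertices_p2qE /= val2_0 dvdn0.
Qed.

End PSquareQ.

Lemma zdg_p2q_very_cost_effective p q :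
  prime p -> prime q -> p != q -> zdg_very_cost_effective (p ^ 2 * q).
Proof. by move=> p_prime q_prime p_neq_q; apply: zdg_vce_of_pred; exact: p2q_vertex_vce. Qed.

Definition partner m := if odd m then m.+1 else m.-1.

Lemma partnerK m : 0 < m -> partner (partner m) = m.
Proof. by case: m => // m _; rewrite /partner /=; case odd_m: (odd m); rewrite /= ?odd_m. Qed.

Lemma odd_partner m : 0 < m -> odd (partner m) = ~~ odd m.
Proof. by case: m => // m _; rewrite /partner /=; case odd_m: (odd m); rewrite /= ?odd_m. Qed.

Lemma coprime_partner m : 0 < m -> coprime m (partner m).
Proof.
by case: m => // m _; rewrite /partner /=; case: (odd m); rewrite /= ?coprimenS ?coprimeSn.
Qed.

Lemma partner_bounds k m : odd k -> 0 < m < k -> 0 < partner m < k.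
Proof.
rewrite /partner => odd_k /andP[m_gt0 m_lt_k]; case: ifP => odd_m.
  by rewrite /= ltn_neqAle m_lt_k andbT; apply: contraTneq odd_k => <- /=; rewrite odd_m.
by case: m m_gt0 m_lt_k odd_m => [|[|m]] //= _ /ltnW ->.
Qed.

Section PSquareQSquare.
Variables p q : nat.
Hypotheses (p_prime : prime p) (q_prime : prime q) (p_neq_q : p != q).
Local Notation n := (p ^ 2 * q ^ 2).

Let coprime_pq : coprime p q.
Proof. by rewrite prime_coprime // dvdn_prime2. Qed.

Lemma p2q2_gt0 : 0 < n.
Proof. by rewrite muln_gt0 !expn_gt0 !prime_gt0. Qed.

Lemma dvdn_p2q2 x : (n %| x) = (1 < val2 p x) && (1 < val2 q x).
Proof. by rewrite Gauss_dvd ?coprimeXl ?coprimeXr // !val2_gt1. Qed.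

Lemma dvdn_p2q2_mul x y :
  (n %| x * y) = (1 < val2 p x + val2 p y) && (1 < val2 q x + val2 q y).
Proof. by rewrite Gauss_dvd ?coprimeXl ?coprimeXr // !dvdn_sqr_mul. Qed.

Lemma zdg_vertices_p2q2E (x : 'I_n) : (x \in zdg_vertices n) =
  ~~ ((1 < val2 p x) && (1 < val2 q x)) && ((0 < val2 p x) || (0 < val2 q x)).
Proof.
rewrite zdg_verticesE dvdn_p2q2 !val2_gt0 coprimeMr !coprime_pexpr //.
by rewrite ![coprime x _]coprime_sym !prime_coprime // -[~~ _ && ~~ (q %| x)]negb_or negbK.
Qed.

(* The side of pq m, for 0 < m < pq: the two members of each pair
   {m, partner m} go to opposite sides, and pq m goes in (resp. out) when it has
   type p q^2 (resp. p^2 q), i.e. when q (resp. p) divides m.  This is consistent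
   because m and partner m are coprime and no such m is divisible by pq. *)
Definition side_of_quotient m :=
  if q %| m then true else if p %| m then false
  else if q %| partner m then false else if p %| partner m then true
  else odd m.

Lemma val2_pq_mul m : val2 p (p * q * m) = (p %| m).+1 /\ val2 q (p * q * m) = (q %| m).+1.
Proof.
rewrite -mulnA val2_pmul // Gauss_dvdr // mulnCA val2_pmul // Gauss_dvdr //.
by rewrite coprime_sym.
Qed.

Definition p2q2_side (x : 'I_n) :=
  if (p %| x) && (q %| x) then side_of_quotient (x %/ (p * q))
  else (val2 p x == 2) || (val2 q x == 1).

Lemma p2q2_side_spec (x : 'I_n) : [/\
  (val2 p x == 0) || (val2 q x == 0) -> p2q2_side x = (val2 p x == 2) || (val2 q x == 1),
  val2 p x = 1 -> val2 q x = 2 -> p2q2_side x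
& val2 p x = 2 -> val2 q x = 1 -> ~~ p2q2_side x].
Proof.
rewrite /p2q2_side; case: ifP => [/andP[px qx]|not_pq]; last first.
  by split=> // pa qb; move: not_pq; rewrite -!val2_gt0 pa qb.
have xE : x = p * q * (x %/ (p * q)) :> nat by rewrite [RHS]mulnC divnK // Gauss_dvd // px qx.
rewrite [in val2 p _]xE [in val2 q _]xE; have [-> ->] := val2_pq_mul (x %/ (p * q)).
by rewrite /side_of_quotient; case: (p %| _); case: (q %| _); split.
Qed.

Lemma p2q2_complement_other_side (v z : 'I_n) :
  v \in zdg_vertices n -> ~~ ((p %| v) && (q %| v)) ->
  val2 p z = 2 - val2 p v -> val2 q z = 2 - val2 q v ->
  z \in other_side_nbhd p2q2_side v.
Proof.
rewrite in_other_side_nbhd !zdg_vertices_p2q2E dvdn_p2q2_mul -!val2_gt0 => vV v_notpq pz qz.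
have [side_v _ _] := p2q2_side_spec v; have [side_z side_zpq side_zqp] := p2q2_side_spec z.
move: (val2_le2 p v) (val2_le2 q v); rewrite pz qz in side_z side_zpq side_zqp *.
lia.
Qed.

Lemma p2q2_same_side_nonmultiple (v y : 'I_n) :
  v \in zdg_vertices n -> ~~ ((p %| v) && (q %| v)) -> y \in same_side_nbhd p2q2_side v ->
  (2 - val2 p v < val2 p y \/ val2 p y = 2) /\ (2 - val2 q v < val2 q y \/ val2 q y = 2).
Proof.
rewrite in_same_side_nbhd !zdg_vertices_p2q2E dvdn_p2q2_mul -!val2_gt0.
move=> vV v_notpq /and4P[yV _ vy /eqP side_y].
have [side_v _ _] := p2q2_side_spec v; have [side_ynpq side_ypq side_yqp] := p2q2_side_spec y.
move: (val2_le2 p v) (val2_le2 q v) (val2_le2 p y) (val2_le2 q y).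
lia.
Qed.

Lemma p2q2_nonmultiple_vce (v : 'I_n) :
  v \in zdg_vertices n -> ~~ ((p %| v) && (q %| v)) ->
  #|same_side_nbhd p2q2_side v| < #|other_side_nbhd p2q2_side v|.
Proof.
(* c has the type complementary to that of v, and translating a same-side
   neighbour of v by c yields an element of that type. *)
move=> vV v_notpq; pose c := p ^ (2 - val2 p v) * q ^ (2 - val2 q v).
have val2p_c : val2 p c = 2 - val2 p v by rewrite val2_expM ?coprimeXr ?leq_subr.
have val2q_c : val2 q c = 2 - val2 q v.
  by rewrite /c [p ^ _ * _]mulnC val2_expM ?coprimeXr 1?coprime_sym ?leq_subr.
have p2n : p ^ 2 %| n by apply: dvdn_mulr.
have q2n : q ^ 2 %| n by apply: dvdn_mull.
apply: (card_lt_shift (n_gt0 := p2q2_gt0) (c := c)) => [y yS||].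
- have [y_p y_q] := p2q2_same_side_nonmultiple vV v_notpq yS.
  apply: p2q2_complement_other_side => //.
    by rewrite (val2_ord_shift_eq p2q2_gt0 p2n) val2p_c.
  by rewrite (val2_ord_shift_eq p2q2_gt0 q2n) val2q_c.
- apply: p2q2_complement_other_side => //.
    by rewrite (val2_ord_shift_eq p2q2_gt0 p2n) ?val2p_c //; right; apply: val2_0.
  by rewrite (val2_ord_shift_eq p2q2_gt0 q2n) ?val2q_c //; right; apply: val2_0.
- by rewrite in_same_side_nbhd zdg_vertices_p2q2E /= !val2_0.
Qed.

Lemma p2q2_multiple_other_side (v z : 'I_n) : p %| v -> q %| v ->
  p %| z -> q %| z -> 0 < z -> p2q2_side z != p2q2_side v ->
  z \in other_side_nbhd p2q2_side v.
Proof.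
move=> pv qv pz qz z_gt0 side_z.
rewrite in_other_side_nbhd zdg_vertices_p2q2E -dvdn_p2q2 dvdn_ord_eq0 -lt0n z_gt0 side_z.
by rewrite dvdn_p2q2_mul andbT; move: pv qv pz qz; rewrite -!val2_gt0; lia.
Qed.

Lemma p2q2_same_side_multiple (v y : 'I_n) : v \in zdg_vertices n -> p %| v -> q %| v ->
  y \in same_side_nbhd p2q2_side v -> ~~ ((p %| y) && (q %| y)) ->
     val2 p v = 2 /\ val2 q v = 1 /\ val2 p y = 0 /\ val2 q y = 2
  \/ val2 p v = 1 /\ val2 q v = 2 /\ val2 p y = 2 /\ val2 q y = 0.
Proof.
rewrite in_same_side_nbhd !zdg_vertices_p2q2E dvdn_p2q2_mul -!val2_gt0.
move=> vV pv qv /and4P[yV _ vy /eqP side_yv] y_notpq.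
have [_ side_vpq side_vqp] := p2q2_side_spec v; have [side_y _ _] := p2q2_side_spec y.
move: (val2_le2 p v) (val2_le2 q v) (val2_le2 p y) (val2_le2 q y) side_y.
by rewrite side_yv; case: (p2q2_side v) side_vpq side_vqp; lia.
Qed.

Lemma p2q2_multiple_shift (v y : 'I_n) :
     val2 p v = 2 /\ val2 q v = 1 /\ val2 p y = 0 /\ val2 q y = 2
  \/ val2 p v = 1 /\ val2 q v = 2 /\ val2 p y = 2 /\ val2 q y = 0 ->
  let s := ord_shift p2q2_gt0 (p ^ val2 p v * q ^ val2 q v) y in
  s \in other_side_nbhd p2q2_side v /\ ~~ ((p %| s) && (q %| s)).
Proof.
move=> types s; have [ne_p ne_q] : val2 p y != val2 p v /\ val2 q y != val2 q v by lia.
have s_p : val2 p s = minn (val2 p y) (val2 p v).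
  have val2_c : val2 p (p ^ val2 p v * q ^ val2 q v) = val2 p v.
    by rewrite val2_expM ?coprimeXr ?val2_le2.
  by rewrite -val2_c (val2_ord_shift p2q2_gt0 (dvdn_mulr _ (dvdnn _))) // val2_c.
have s_q : val2 q s = minn (val2 q y) (val2 q v).
  have val2_c : val2 q (p ^ val2 p v * q ^ val2 q v) = val2 q v.
    by rewrite [p ^ val2 p v * _]mulnC val2_expM ?coprimeXr 1?coprime_sym ?val2_le2.
  by rewrite -val2_c (val2_ord_shift p2q2_gt0 (dvdn_mull _ (dvdnn _))) // val2_c.
have [_ side_vpq side_vqp] := p2q2_side_spec v; have [side_s _ _] := p2q2_side_spec s.
rewrite in_other_side_nbhd zdg_vertices_p2q2E dvdn_p2q2_mul -!val2_gt0 s_p s_q in side_s *.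
lia.
Qed.

Section Pairing.
Hypothesis odd_pq : odd (p * q).

Let pq_gt0 : 0 < p * q.
Proof. by rewrite muln_gt0 !prime_gt0. Qed.

Lemma side_of_quotient_partner m : 0 < m < p * q ->
  side_of_quotient (partner m) = ~~ side_of_quotient m.
Proof.
move=> m_bounds; have /andP[m_gt0 m_lt] := m_bounds.
have /andP[m'_gt0 m'_lt] := partner_bounds odd_pq m_bounds.
have not_both r : prime r -> ~~ ((r %| m) && (r %| partner m)).
  by move=> r_prime; rewrite -dvdn_gcd (eqP (coprime_partner m_gt0)) dvdn1 gtn_eqF ?prime_gt1.
have not_pq k : 0 < k < p * q -> ~~ ((p %| k) && (q %| k)).
  case/andP=> k_gt0 k_lt; rewrite -Gauss_dvd //.
  by apply: contraL k_lt => /(dvdn_leq k_gt0); rewrite leqNgt.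
move: (not_both _ p_prime) (not_both _ q_prime) (not_pq _ m_bounds).
move: (not_pq _ (partner_bounds odd_pq m_bounds)).
rewrite /side_of_quotient partnerK // odd_partner //.
by case: (p %| m); case: (q %| m); case: (p %| partner m); case: (q %| partner m).
Qed.

Section PairMultiples.
Variable x : 'I_n.
Hypotheses (px : p %| x) (qx : q %| x) (x_gt0 : 0 < x).

Lemma quotient_bounds : 0 < x %/ (p * q) < p * q.
Proof.
rewrite divn_gt0 // ltn_divLR // dvdn_leq ?Gauss_dvd ?px //=.
by rewrite mulnn expnMn ltn_ord.
Qed.

Definition pair_ord : 'I_n := insubd x (p * q * partner (x %/ (p * q))).

Lemma pair_ordE : pair_ord = p * q * partner (x %/ (p * q)) :> nat.
Proof.
have /andP[_ lt_pq] := partner_bounds odd_pq quotient_bounds.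
have lt_n : p * q * partner (x %/ (p * q)) < n.
  by move: (partner _) lt_pq => k; rewrite -expnMn -mulnn ltn_pmul2l.
by rewrite val_insubd lt_n.
Qed.

Lemma pair_ord_spec :
  [/\ p %| pair_ord, q %| pair_ord, 0 < pair_ord & p2q2_side pair_ord = ~~ p2q2_side x].
Proof.
have /andP[m'_gt0 _] := partner_bounds odd_pq quotient_bounds.
have pf : p %| pair_ord by rewrite pair_ordE -mulnA dvdn_mulr.
have qf : q %| pair_ord by rewrite pair_ordE (mulnC p) -mulnA dvdn_mulr.
split=> //; first by rewrite pair_ordE muln_gt0 pq_gt0.
rewrite /p2q2_side pf qf px qx /= pair_ordE mulKn //.
by rewrite side_of_quotient_partner ?quotient_bounds.
Qed.

End PairMultiples.

Lemma pair_ord_inj (x y : 'I_n) : p %| x -> q %| x -> 0 < x -> p %| y -> q %| y -> 0 < y ->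
  pair_ord x = pair_ord y -> x = y.
Proof.
move=> px qx x_gt0 py qy y_gt0 /(congr1 (@nat_of_ord _)).
rewrite (pair_ordE px qx x_gt0) (pair_ordE py qy y_gt0).
move/eqP; rewrite eqn_pmul2l // => /eqP/(congr1 partner).
have /andP[mx_gt0 _] := quotient_bounds px qx x_gt0.
have /andP[my_gt0 _] := quotient_bounds py qy y_gt0.
rewrite !partnerK // => eq_quot; apply: val_inj.
by rewrite /= -(divnK (_ : p * q %| x)) ?Gauss_dvd ?px // eq_quot divnK // Gauss_dvd ?py.
Qed.

Lemma p2q2_multiple_vce (v : 'I_n) : v \in zdg_vertices n -> p %| v -> q %| v ->
  #|same_side_nbhd p2q2_side v| < #|other_side_nbhd p2q2_side v|.
Proof.
move=> vV pv qv; have v_gt0 := zdg_vertex_gt0 vV.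
pose f (y : 'I_n) := if (p %| y) && (q %| y) then pair_ord y
            else ord_shift p2q2_gt0 (p ^ val2 p v * q ^ val2 q v) y.
have same_gt0 y : y \in same_side_nbhd p2q2_side v -> 0 < y.
  by rewrite in_same_side_nbhd => /andP[/zdg_vertex_gt0].
have f_spec y : y \in same_side_nbhd p2q2_side v ->
    f y \in other_side_nbhd p2q2_side v /\ ((p %| f y) && (q %| f y)) = (p %| y) && (q %| y).
  move=> yS; rewrite /f; case: ifP => [/andP[py qy] | /negbT y_notpq].
    have [pf qf f_gt0 side_f] := pair_ord_spec py qy (same_gt0 y yS).
    split; last by rewrite pf qf.
    apply: p2q2_multiple_other_side; rewrite // side_f.
    by move: yS; rewrite in_same_side_nbhd => /and4P[_ _ _ /eqP ->]; case: (p2q2_side v).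
  have [] := p2q2_multiple_shift (p2q2_same_side_multiple vV pv qv yS y_notpq).
  by move=> s_other /negbTE ->.
have [pv' qv' pair_gt0 side_pair] := pair_ord_spec pv qv v_gt0.
apply: (card_lt_inj (f := f) (b := pair_ord v)).
- move=> y1 y2 y1S y2S eq_f.
  have [_ M1] := f_spec y1 y1S; have [_ M2] := f_spec y2 y2S.
  have M12 : (p %| y1) && (q %| y1) = (p %| y2) && (q %| y2) by rewrite -M1 -M2 eq_f.
  move: eq_f; rewrite /f -M12; case: ifP => [/[dup] /andP[p1 q1] | _].
    rewrite M12 => /andP[p2 q2].
    exact: pair_ord_inj (same_gt0 _ y1S) p2 q2 (same_gt0 _ y2S).
  exact: ord_shift_inj.
- by move=> y /f_spec[].
- by apply: p2q2_multiple_other_side; rewrite // side_pair; case: (p2q2_side v).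
- move=> y yS; have y_gt0 := same_gt0 y yS.
  have [_] := f_spec y yS; rewrite /f; case: ifP => [/andP[py qy] _ | _ M_f].
    apply: contraTneq yS => /(pair_ord_inj py qy y_gt0 pv qv v_gt0) ->.
    by rewrite in_same_side_nbhd eqxx andbF.
  by apply/eqP => eq_s; move: M_f; rewrite eq_s pv' qv'.
Qed.

End Pairing.

End PSquareQSquare.

Lemma zdg_p2q2_very_cost_effective p q : prime p -> prime q -> p != q ->
  odd (p * q) -> zdg_very_cost_effective (p ^ 2 * q ^ 2).
Proof.
move=> p_prime q_prime p_neq_q odd_pq; apply: zdg_vce_of_pred => v vV.
case: (boolP ((p %| v) && (q %| v))) => [/andP[pv qv] | v_notpq].
  exact: p2q2_multiple_vce.
exact: p2q2_nonmultiple_vce.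
Qed.

Unset Implicit Arguments.

Theorem mainTheorem3 (p q : nat) :
  prime p -> prime q -> p != q ->
  zdg_very_cost_effective (p ^ 2 * q) /\
  (3 <= p -> 3 <= q -> p < q -> zdg_very_cost_effective (p ^ 2 * q ^ 2)).
Proof.
move=> p_prime q_prime p_neq_q; split; first exact: zdg_p2q_very_cost_effective.
have odd_prime r : prime r -> 3 <= r -> odd r by move=> /even_prime[-> //|].
move=> p_ge3 q_ge3 _; apply: zdg_p2q2_very_cost_effective => //.
by rewrite oddM !odd_prime.
Qed.
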